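(* Let $\tilde\beta\in(0,1)$. Consider: (C3.1): there exist symmetric positive definite $Q^{(k)}\in\mathbb{R}^{\tilde n\times\tilde n}$, $k\in\{1,\dots,N\}$, and a symmetric positive semidefinite $Z\in\mathbb{R}^{n(n+m)\times n(n+m)}$ with $\mathrm{rank}(Z)=1$ and $S^{(k)}_{\rm lmi}(Q^{(k)},Z,\tilde\beta)\succeq0$ for all $k$; (C3.2): there exist symmetric positive definite $Q^{(k)}$ and symmetric positive semidefinite $Z$ with $\mathrm{rank}(Z)=1$ and $S^{(k)}_{\rm lmi}(Q^{(k)},Z,1)\succ0$ for all $k$; (C2.1): there exist symmetric positive definite $Q^{(k)}$, $H\in\mathbb{R}^{n\times n}$, $L\in\mathbb{R}^{m\times n}$ with $S^{(k)}_{\rm qmi}(Q^{(k)},H,L,\tilde\beta)\succeq0$ for all $k$; (C2.2): there exist symmetric positive definite $Q^{(k)}$, $H$, $L$ with $S^{(k)}_{\rm qmi}(Q^{(k)},H,L,1)\succ0$ for all $k$. Then (C3.1) is equivalent to (C2.1), and (C3.2) is equivalent to (C2.2), where $Z$ and $(H,L)$ correspond via $Z=\begin{bmatrix}\mathrm{vec}(H)\\ \mathrm{vec}(L)\end{bmatrix}\begin{bmatrix}\mathrm{vec}(H)\\ \mathrm{vec}(L)\end{bmatrix}^\top$.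
   Context: Let $n,m,N$ be positive integers, $\tilde n=n(n+1)/2$. $\mathrm{vec}$ stacks columns; $\mathrm{vech}(X)$ stacks columnwise the entries on and below the diagonal. $E_e\in\mathbb{R}^{\tilde n\times n^2}$ with $E_e\mathrm{vec}(X)=\mathrm{vech}(X)$ for all $X\in\mathbb{R}^{n\times n}$; $D\in\mathbb{R}^{n^2\times\tilde n}$ with $D\mathrm{vech}(Y)=\mathrm{vec}(Y)$ for symmetric $Y$; $\mathcal{C}(Y):=E_eYD$. Let $M^{(1)},\dots,M^{(N)}\in\mathbb{R}^{n(n+m)\times n(n+m)}$ be symmetric, with blocks $M^{(k)}_{i,j}\in\mathbb{R}^{n\times n}$ ($i,j\le n+m$). Column $n(j-1)+i$ of $F^{(k)}_{aa}\in\mathbb{R}^{n^2\times n^2}$ is $\mathrm{vec}(M^{(k)}_{i,j})$; column $m(j-1)+i'$ of $F^{(k)}_{ab}\in\mathbb{R}^{n^2\times nm}$ is $\mathrm{vec}(M^{(k)}_{n+i',j})$; column $n(j'-1)+i$ of $F^{(k)}_{ba}\in\mathbb{R}^{n^2\times nm}$ is $\mathrm{vec}(M^{(k)}_{i,n+j'})$; column $m(j'-1)+i'$ of $F^{(k)}_{bb}\in\mathbb{R}^{n^2\times m^2}$ is $\mathrm{vec}(M^{(k)}_{n+i',n+j'})$ ($i,j\le n$, $i',j'\le m$). QMI: $F^{(k)}_{\rm qmi}(L,H):=\mathcal{C}(F^{(k)}_{aa}(H\otimes H)-F^{(k)}_{ab}(H\otimes L)-F^{(k)}_{ba}(L\otimes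 H)+F^{(k)}_{bb}(L\otimes L))$, $S^{(k)}_{\rm qmi}(Q,H,L,\tilde\beta):=\begin{bmatrix}\tilde\beta^2Q & F^{(k)}_{\rm qmi}(L,H)^\top\\ F^{(k)}_{\rm qmi}(L,H) & \mathcal{C}(H\otimes H)+\mathcal{C}(H\otimes H)^\top-Q\end{bmatrix}$. LMI: for symmetric $Z\in\mathbb{R}^{n(n+m)\times n(n+m)}$, partition into $2n\times2n$ blocks $Z_{p,q}$, with block rows/columns $1..n$ of size $n$ and $n+1..2n$ of size $m$. Define $F_{hh}(Z)\in\mathbb{R}^{n^2\times n^2}$, $F_{hl}(Z),F_{lh}(Z)\in\mathbb{R}^{mn\times n^2}$, $F_{ll}(Z)\in\mathbb{R}^{m^2\times n^2}$ by: for $i,j\le n$, column $n(j-1)+i$ equals $\mathrm{vec}(Z_{i,j})$, $\mathrm{vec}(Z_{n+i,j})$, $\mathrm{vec}(Z_{i,n+j})$, $\mathrm{vec}(Z_{n+i,n+j})$ respectively. $F^{(k)}_{\rm lmi}(Z):=\mathcal{C}(F^{(k)}_{aa}F_{hh}(Z)-F^{(k)}_{ab}F_{hl}(Z)-F^{(k)}_{ba}F_{lh}(Z)+F^{(k)}_{bb}F_{ll}(Z))$ and $S^{(k)}_{\rm lmi}(Q,Z,\tilde\beta):=\begin{bmatrix}\tilde\beta^2Q & F^{(k)}_{\rm lmi}(Z)^\top\\ F^{(k)}_{\rm lmi}(Z) & \mathcal{C}(F_{hh}(Z))+\mathcal{C}(F_{hh}(Z))^\top-Q\end{bmatrix}$.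 *)

(* All matrices are over an abstract real field R, 0-based indices. *)
From HB Require Import structures.
From mathcomp Require Import all_boot all_order all_algebra.
Import Order.TTheory GRing.Theory Num.Theory.
Local Open Scope ring_scope.

Section Defs.
Context {R : rcfType}.

(* entry of a matrix addressed by natural numbers (0 outside the range) *)
Definition mxat {a b : nat} (A : 'M[R]_(a, b)) (i j : nat) : R :=
  match (insub i : option 'I_a), (insub j : option 'I_b) with
  | Some i', Some j' => A i' j'
  | _, _ => 0
  end.

Definition mxfun (a b : nat) (f : nat -> nat -> R) : 'M[R]_(a, b) :=
  \matrix_(i < a, j < b) f i j.

Definition vec {p q : nat} (X : 'M[R]_(p, q)) : 'cV[R]_(p * q) :=
  mxfun (p * q) 1 (fun k _ => mxat X (k %% p) (k %/ p)).

Definition kron {p q r s : nat} (A : 'M[R]_(p, q)) (B : 'M[R]_(r, s))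
  : 'M[R]_(p * r, q * s) :=
  mxfun (p * r) (q * s)
    (fun x y => mxat A (x %/ r) (y %/ s) * mxat B (x %% r) (y %% s)).

Definition tn (n : nat) : nat := (n * n.+1)./2.

(* position (0-based) in vech of the entry (i,j), j <= i < n, stacking the
   lower-triangular part column by column *)
Definition vech_index (n i j : nat) : nat := (j * n - 'C(j, 2) + (i - j))%N.

(* E_e : E_e vec(X) = vech(X) *)
Definition Ee (n : nat) : 'M[R]_(tn n, n * n) :=
  mxfun (tn n) (n * n) (fun idx k =>
    if (k %/ n <= k %% n)%N && (idx == vech_index n (k %% n) (k %/ n))
    then 1 else 0).

(* D : D vech(Y) = vec(Y) for symmetric Y *)
Definition Dup (n : nat) : 'M[R]_(n * n, tn n) :=
  mxfun (n * n) (tn n) (fun k idx =>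
    if idx == vech_index n (maxn (k %% n) (k %/ n)) (minn (k %% n) (k %/ n))
    then 1 else 0).

Definition Ccal (n : nat) (Y : 'M[R]_(n * n)) : 'M[R]_(tn n) := Ee n *m Y *m Dup n.

(* The matrices F_aa, F_ab, F_ba, F_bb built from M (blocks M_{i,j} of size n x n) *)
Definition Faa (n m : nat) (M : 'M[R]_(n * (n + m))) : 'M[R]_(n * n, n * n) :=
  mxfun _ _ (fun r c => mxat M (n * (c %% n) + r %% n) (n * (c %/ n) + r %/ n)).
Definition Fab (n m : nat) (M : 'M[R]_(n * (n + m))) : 'M[R]_(n * n, n * m) :=
  mxfun _ _ (fun r c => mxat M (n * (n + c %% m) + r %% n) (n * (c %/ m) + r %/ n)).
Definition Fba (n m : nat) (M : 'M[R]_(n * (n + m))) : 'M[R]_(n * n, m * n) :=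
  mxfun _ _ (fun r c => mxat M (n * (c %% n) + r %% n) (n * (n + c %/ n) + r %/ n)).
Definition Fbb (n m : nat) (M : 'M[R]_(n * (n + m))) : 'M[R]_(n * n, m * m) :=
  mxfun _ _ (fun r c => mxat M (n * (n + c %% m) + r %% n) (n * (n + c %/ m) + r %/ n)).

Definition Fqmi (n m : nat) (M : 'M[R]_(n * (n + m)))
  (L : 'M[R]_(m, n)) (H : 'M[R]_n) : 'M[R]_(tn n) :=
  Ccal n (Faa n m M *m kron H H - Fab n m M *m kron H L
          - Fba n m M *m kron L H + Fbb n m M *m kron L L).

Definition Sqmi (n m : nat) (M : 'M[R]_(n * (n + m)))
  (Q : 'M[R]_(tn n)) (H : 'M[R]_n) (L : 'M[R]_(m, n)) (bt : R)
  : 'M[R]_(tn n + tn n) :=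
  block_mx (bt ^+ 2 *: Q) (Fqmi n m M L H)^T
           (Fqmi n m M L H) (Ccal n (kron H H) + (Ccal n (kron H H))^T - Q).

(* LMI: Z partitioned into 2n x 2n blocks, block rows/cols 1..n of size n,
   n+1..2n of size m *)
Definition Fhh (n m : nat) (Z : 'M[R]_(n * (n + m))) : 'M[R]_(n * n, n * n) :=
  mxfun _ _ (fun r c => mxat Z (n * (c %% n) + r %% n) (n * (c %/ n) + r %/ n)).
Definition Fhl (n m : nat) (Z : 'M[R]_(n * (n + m))) : 'M[R]_(n * m, n * n) :=
  mxfun _ _ (fun r c =>
    mxat Z (n * n + m * (c %% n) + r %% m) (n * (c %/ n) + r %/ m)).
Definition Flh (n m : nat) (Z : 'M[R]_(n * (n + m))) : 'M[R]_(m * n, n * n) :=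
  mxfun _ _ (fun r c =>
    mxat Z (n * (c %% n) + r %% n) (n * n + m * (c %/ n) + r %/ n)).
Definition Fll (n m : nat) (Z : 'M[R]_(n * (n + m))) : 'M[R]_(m * m, n * n) :=
  mxfun _ _ (fun r c =>
    mxat Z (n * n + m * (c %% n) + r %% m) (n * n + m * (c %/ n) + r %/ m)).

Definition Flmi (n m : nat) (M Z : 'M[R]_(n * (n + m))) : 'M[R]_(tn n) :=
  Ccal n (Faa n m M *m Fhh n m Z - Fab n m M *m Fhl n m Z
          - Fba n m M *m Flh n m Z + Fbb n m M *m Fll n m Z).

Definition Slmi (n m : nat) (M : 'M[R]_(n * (n + m)))
  (Q : 'M[R]_(tn n)) (Z : 'M[R]_(n * (n + m))) (bt : R) : 'M[R]_(tn n + tn n) :=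
  block_mx (bt ^+ 2 *: Q) (Flmi n m M Z)^T
           (Flmi n m M Z) (Ccal n (Fhh n m Z) + (Ccal n (Fhh n m Z))^T - Q).

Definition stackHL (n m : nat) (H : 'M[R]_n) (L : 'M[R]_(m, n)) : 'cV[R]_(n * (n + m)) :=
  mxfun _ 1 (fun k _ => if (k < n * n)%N then mxat (vec H) k 0
                        else mxat (vec L) (k - n * n)%N 0).
Definition Zof (n m : nat) (H : 'M[R]_n) (L : 'M[R]_(m, n)) : 'M[R]_(n * (n + m)) :=
  stackHL n m H L *m (stackHL n m H L)^T.

Definition psdmx {d : nat} (A : 'M[R]_d) : Prop :=
  A^T = A /\ forall x : 'cV[R]_d, 0 <= (x^T *m A *m x) ord0 ord0.
Definition pdmx {d : nat} (A : 'M[R]_d) : Prop :=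
  A^T = A /\ forall x : 'cV[R]_d, x != 0 -> 0 < (x^T *m A *m x) ord0 ord0.

Definition C31 (n m N : nat) (M : 'I_N -> 'M[R]_(n * (n + m))) (bt : R) : Prop :=
  exists (Q : 'I_N -> 'M[R]_(tn n)) (Z : 'M[R]_(n * (n + m))),
    (forall k, pdmx (Q k)) /\ psdmx Z /\ \rank Z = 1%N /\
    (forall k, psdmx (Slmi n m (M k) (Q k) Z bt)).
Definition C32 (n m N : nat) (M : 'I_N -> 'M[R]_(n * (n + m))) : Prop :=
  exists (Q : 'I_N -> 'M[R]_(tn n)) (Z : 'M[R]_(n * (n + m))),
    (forall k, pdmx (Q k)) /\ psdmx Z /\ \rank Z = 1%N /\
    (forall k, pdmx (Slmi n m (M k) (Q k) Z 1)).
Definition C21 (n m N : nat) (M : 'I_N -> 'M[R]_(n * (n + m))) (bt : R) : Prop :=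
  exists (Q : 'I_N -> 'M[R]_(tn n)) (H : 'M[R]_n) (L : 'M[R]_(m, n)),
    (forall k, pdmx (Q k)) /\ (forall k, psdmx (Sqmi n m (M k) (Q k) H L bt)).
Definition C22 (n m N : nat) (M : 'I_N -> 'M[R]_(n * (n + m))) : Prop :=
  exists (Q : 'I_N -> 'M[R]_(tn n)) (H : 'M[R]_n) (L : 'M[R]_(m, n)),
    (forall k, pdmx (Q k)) /\ (forall k, pdmx (Sqmi n m (M k) (Q k) H L 1)).

End Defs.

From HB Require Import structures.
From mathcomp Require Import all_boot all_order all_algebra.
From mathcomp Require Import zify ring lra.
Import Order.TTheory GRing.Theory Num.Theory.
Local Open Scope ring_scope.

Set Implicit Arguments.
Unset Strict Implicit.
Unset Printing Implicit Defensive.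

(* Write s for the column [vec H; vec L]. The blocks F_hh, F_hl, F_lh, F_ll
   of Z = s s^T are exactly H (x) H, H (x) L, L (x) H, L (x) L, so that
   S_lmi(Q, s s^T, b) = S_qmi(Q, H, L, b) as matrices. Conversely, a positive
   semidefinite Z of rank one is s s^T for some column s, and every column s
   is [vec H; vec L] for some H and L. The rank condition costs nothing in the
   other direction: s = 0 is impossible, since for Z = 0 the lower right block
   of S_lmi is -Q, which is negative definite. *)

Section MatrixFacts.
Variable R : rcfType.

Lemma mxatE a b (A : 'M[R]_(a, b)) i j (hi : (i < a)%N) (hj : (j < b)%N) :
  mxat A i j = A (Ordinal hi) (Ordinal hj).
Proof.
rewrite /mxat; case: insubP => [i' _ ei|]; last by rewrite hi.
case: insubP => [j' _ ej|]; last by rewrite hj.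
by congr (A _ _); apply: val_inj.
Qed.

Lemma mxat_ord a b (A : 'M[R]_(a, b)) (i : 'I_a) (j : 'I_b) : mxat A i j = A i j.
Proof. by rewrite (mxatE A (ltn_ord i) (ltn_ord j)); congr (A _ _); apply: val_inj. Qed.

Lemma mxat_mxfun a b (f : nat -> nat -> R) i j :
  (i < a)%N -> (j < b)%N -> mxat (mxfun a b f) i j = f i j.
Proof. by move=> hi hj; rewrite (mxatE _ hi hj) mxE. Qed.

Lemma mxat0 a b i j : mxat (0 : 'M[R]_(a, b)) i j = 0.
Proof. by rewrite /mxat; case: (insub i) => [x|] //; case: (insub j) => [y|] //; rewrite mxE. Qed.

Lemma mxat_outer d (s : 'cV[R]_d) i j :
  mxat (s *m s^T) i j = mxat s i 0 * mxat s j 0.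
Proof.
rewrite /mxat; case: (insub i) => [i'|]; last by rewrite mul0r.
case: (insub j) => [j'|]; last by rewrite mulr0.
by case: insubP => [z _ _|//]; rewrite mxE big_ord1 mxE (ord1 z).
Qed.

Lemma pdmx_psdmx d (A : 'M[R]_d) : pdmx A -> psdmx A.
Proof.
case=> hsym hpos; split => // x; have [->|/hpos/ltW //] := eqVneq x 0.
by rewrite mulmx0 mxE.
Qed.

Lemma quad_form_outer d (s x : 'cV[R]_d) :
  (x^T *m (s *m s^T) *m x) ord0 ord0 = ((x^T *m s) ord0 ord0) ^+ 2.
Proof.
rewrite !mulmxA -(mulmxA (x^T *m s)) -[s^T *m x]trmxK trmx_mul trmxK.
by rewrite mxE big_ord1 [_^T _ _]mxE expr2.
Qed.

Lemma psdmx_outer d (s : 'cV[R]_d) : psdmx (s *m s^T).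
Proof. by split=> [|x]; rewrite ?trmx_mul ?trmxK // quad_form_outer sqr_ge0. Qed.

Lemma mxrank_outer d (s : 'cV[R]_d) : s != 0 -> \rank (s *m s^T) = 1%N.
Proof.
move=> s_neq0; apply/eqP; rewrite eqn_leq (leq_trans (mxrankM_maxl _ _)) ?rank_leq_col //.
rewrite lt0n mxrank_eq0; apply: contra s_neq0 => /eqP/matrixP ss0.
apply/eqP/matrixP => i j; rewrite (ord1 j) !mxE.
by move: (ss0 i i); rewrite !mxE big_ord1 !mxE => /eqP; rewrite mulf_eq0 orbb => /eqP.
Qed.

Lemma mxrank1_factor a b (A : 'M[R]_(a, b)) : \rank A = 1%N ->
  exists (u : 'cV[R]_a) (v : 'rV[R]_b), A = u *m v.
Proof.
move=> rk1; have := mulmx_base A; move: (col_base A) (row_base A).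
by rewrite rk1 => u v <-; exists u, v.
Qed.

Lemma psdmx_rank1 d (Z : 'M[R]_d) : psdmx Z -> \rank Z = 1%N ->
  exists s : 'cV[R]_d, Z = s *m s^T.
Proof.
move=> [Zsym Zpsd] rk1; have [u [v defZ]] := mxrank1_factor rk1.
have Zuv j k : Z j k = u j 0 * v 0 k by rewrite defZ mxE big_ord1.
have [i ui_neq0] : exists i, u i 0 != 0.
  apply/existsP; apply: contraPT rk1 => /existsPn u0.
  suff -> : Z = 0 by rewrite mxrank0.
  by apply/matrixP => j k; rewrite Zuv mxE (eqP (negbNE (u0 j))) mul0r.
(* Symmetry forces v = c u^T, and positivity at the i-th basis vector c >= 0. *)
pose c := v 0 i / u i 0.
have vE k : v 0 k = c * u k 0.
  apply: (mulfI ui_neq0); rewrite -Zuv -Zsym mxE Zuv /c; field.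
  exact: ui_neq0.
have c_ge0 : 0 <= c.
  have := Zpsd (delta_mx i 0).
  rewrite trmx_delta -rowE -colE !mxE Zuv vE mulrCA -expr2.
  by rewrite pmulr_lge0 // exprn_even_gt0.
exists (Num.sqrt c *: u); apply/matrixP => j k.
rewrite Zuv vE !mxE big_ord1 !mxE -[in LHS](sqr_sqrtr c_ge0) expr2; ring.
Qed.

Lemma quad_form_block_dr p q (A : 'M[R]_p) B C (D : 'M[R]_q) (y : 'cV[R]_q) :
  (col_mx 0 y)^T *m block_mx A B C D *m col_mx 0 y = y^T *m D *m y.
Proof.
by rewrite tr_col_mx mul_row_block mul_row_col !trmx0 !mul0mx !add0r mulmx0 add0r.
Qed.

End MatrixFacts.

Section Vectorization.
Variables (R : rcfType) (n m : nat).
Hypotheses (n_gt0 : (0 < n)%N) (m_gt0 : (0 < m)%N).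
Implicit Types (H : 'M[R]_n) (L : 'M[R]_(m, n)).

Lemma mxat_stackHL_H H L i j : (i < n)%N -> (j < n)%N ->
  mxat (stackHL n m H L) (n * j + i) 0 = mxat H i j.
Proof.
move=> hi hj; rewrite /stackHL mxat_mxfun ?ifT /vec ?mxat_mxfun //; try nia.
by rewrite mulnC modnMDl modn_small // divnMDl // divn_small ?addn0.
Qed.

Lemma mxat_stackHL_L H L i j : (i < m)%N -> (j < n)%N ->
  mxat (stackHL n m H L) (n * n + m * j + i) 0 = mxat L i j.
Proof.
move=> hi hj; rewrite /stackHL mxat_mxfun ?ifF /vec ?mxat_mxfun //; try nia.
by rewrite -addnA addKn mulnC modnMDl modn_small // divnMDl // divn_small ?addn0.
Qed.

Lemma stackHL_surj (s : 'cV[R]_(n * (n + m))) : exists H L, stackHL n m H L = s.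
Proof.
exists (mxfun n n (fun i j => mxat s (n * j + i) 0)).
exists (mxfun m n (fun i j => mxat s (n * n + m * j + i) 0)).
apply/matrixP => k z; rewrite (ord1 z) -!mxat_ord.
have k_lt := ltn_ord k; case: (ltnP k (n * n)) => k_nn.
  have -> : nat_of_ord k = (n * (k %/ n) + k %% n)%N by rewrite [(n * (k %/ n))%N]mulnC -divn_eq.
  by rewrite mxat_stackHL_H ?mxat_mxfun ?ltn_pmod //; nia.
have -> : nat_of_ord k = (n * n + m * ((k - n * n) %/ m) + (k - n * n) %% m)%N.
  by rewrite -addnA [(m * ((k - n * n) %/ m))%N]mulnC -divn_eq subnKC.
by rewrite mxat_stackHL_L ?mxat_mxfun ?ltn_pmod //; nia.
Qed.

Lemma Fhh_Zof H L : Fhh n m (Zof n m H L) = kron H H.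
Proof.
apply/matrixP => r c; rewrite !mxE mxat_outer mulrC.
have r_lt := ltn_ord r; have c_lt := ltn_ord c.
by rewrite !mxat_stackHL_H ?ltn_pmod //; nia.
Qed.

Lemma Fhl_Zof H L : Fhl n m (Zof n m H L) = kron H L.
Proof.
apply/matrixP => r c; rewrite !mxE mxat_outer mulrC.
have r_lt := ltn_ord r; have c_lt := ltn_ord c.
by rewrite mxat_stackHL_H ?mxat_stackHL_L ?ltn_pmod //; nia.
Qed.

Lemma Flh_Zof H L : Flh n m (Zof n m H L) = kron L H.
Proof.
apply/matrixP => r c; rewrite !mxE mxat_outer mulrC.
have r_lt := ltn_ord r; have c_lt := ltn_ord c.
by rewrite mxat_stackHL_H ?mxat_stackHL_L ?ltn_pmod //; nia.
Qed.

Lemma Fll_Zof H L : Fll n m (Zof n m H L) = kron L L.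
Proof.
apply/matrixP => r c; rewrite !mxE mxat_outer mulrC.
have r_lt := ltn_ord r; have c_lt := ltn_ord c.
by rewrite !mxat_stackHL_L ?ltn_pmod //; nia.
Qed.

Lemma Slmi_Zof M Q bt H L : Slmi n m M Q (Zof n m H L) bt = Sqmi n m M Q H L bt.
Proof. by rewrite /Slmi /Sqmi /Flmi /Fqmi Fhh_Zof Fhl_Zof Flh_Zof Fll_Zof. Qed.

Lemma tn_gt0 : (0 < tn n)%N.
Proof. by rewrite /tn -divn2 divn_gt0 //; nia. Qed.

Lemma Slmi0_not_psdmx (M : 'M[R]_(n * (n + m))) (Q : 'M[R]_(tn n)) (bt : R) :
  pdmx Q -> ~ psdmx (Slmi n m M Q 0 bt).
Proof.
move=> [_ Qpos] [_ Spos]; pose y : 'cV[R]_(tn n) := delta_mx (Ordinal tn_gt0) 0.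
have y_neq0 : y != 0.
  by apply/negP => /eqP/matrixP/(_ (Ordinal tn_gt0) 0)/eqP; rewrite !mxE !eqxx oner_eq0.
have Fhh0 : Fhh n m (0 : 'M[R]_(n * (n + m))) = 0.
  by apply/matrixP => i j; rewrite !mxE mxat0.
have := Spos (col_mx 0 y); rewrite /Slmi quad_form_block_dr Fhh0 /Ccal.
rewrite mulmx0 mul0mx trmx0 add0r sub0r mulmxN mulNmx mxE.
by have := Qpos _ y_neq0; lra.
Qed.

End Vectorization.

Section LmiQmi.
Variables (R : rcfType) (n m N : nat) (M : 'I_N -> 'M[R]_(n * (n + m))) (bt : R).
Hypotheses (n_gt0 : (0 < n)%N) (m_gt0 : (0 < m)%N) (N_gt0 : (0 < N)%N).
(* P is either psdmx or pdmx. *)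
Variable P : 'M[R]_(tn n + tn n) -> Prop.
Hypothesis P_psdmx : forall X, P X -> psdmx X.

Lemma lmi_to_qmi (Q : 'I_N -> 'M[R]_(tn n)) (Z : 'M[R]_(n * (n + m))) :
  psdmx Z -> \rank Z = 1%N -> (forall k, P (Slmi n m (M k) (Q k) Z bt)) ->
  exists (H : 'M[R]_n) (L : 'M[R]_(m, n)),
    Z = Zof n m H L /\ forall k, P (Sqmi n m (M k) (Q k) H L bt).
Proof.
move=> Zpsd rk1 PS; have [s defZ] := psdmx_rank1 Zpsd rk1.
have [H [L defs]] := stackHL_surj n_gt0 m_gt0 s.
have defZHL : Z = Zof n m H L by rewrite defZ /Zof defs.
by exists H, L; split=> // k; rewrite -Slmi_Zof // -defZHL.
Qed.

Lemma qmi_to_lmi (Q : 'I_N -> 'M[R]_(tn n)) (H : 'M[R]_n) (L : 'M[R]_(m, n)) :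
  (forall k, pdmx (Q k)) -> (forall k, P (Sqmi n m (M k) (Q k) H L bt)) ->
  psdmx (Zof n m H L) /\ \rank (Zof n m H L) = 1%N /\
  (forall k, P (Slmi n m (M k) (Q k) (Zof n m H L) bt)).
Proof.
move=> Qpd PS; have PS' k : P (Slmi n m (M k) (Q k) (Zof n m H L) bt).
  by rewrite Slmi_Zof.
split; first exact: psdmx_outer.
split=> //; apply: mxrank_outer; apply: contraPneq (PS' (Ordinal N_gt0)) => s0 /P_psdmx.
by rewrite /Zof s0 mul0mx; apply: Slmi0_not_psdmx.
Qed.

Lemma lmi_qmi_equiv :
  (exists (Q : 'I_N -> 'M[R]_(tn n)) (Z : 'M[R]_(n * (n + m))),
     (forall k, pdmx (Q k)) /\ psdmx Z /\ \rank Z = 1%N /\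
     (forall k, P (Slmi n m (M k) (Q k) Z bt))) <->
  (exists (Q : 'I_N -> 'M[R]_(tn n)) (H : 'M[R]_n) (L : 'M[R]_(m, n)),
     (forall k, pdmx (Q k)) /\ (forall k, P (Sqmi n m (M k) (Q k) H L bt))).
Proof.
split=> [[Q [Z [Qpd [Zpsd [rk1 PS]]]]] | [Q [H [L [Qpd PS]]]]].
  by have [H [L [_ PS']]] := lmi_to_qmi Zpsd rk1 PS; exists Q, H, L.
by have [Zpsd [rk1 PS']] := qmi_to_lmi Qpd PS; exists Q, (Zof n m H L).
Qed.

End LmiQmi.

Unset Implicit Arguments.

Theorem theorem8 (R : rcfType) (n m N : nat)
  (M : 'I_N -> 'M[R]_(n * (n + m))) (bt : R) :
  (0 < n)%N -> (0 < m)%N -> (0 < N)%N ->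
  (forall k, (M k)^T = M k) ->
  0 < bt < 1 ->
  (* the stated equivalences *)
  (C31 n m N M bt <-> C21 n m N M bt) /\
  (C32 n m N M <-> C22 n m N M) /\
  (* the correspondence Z = [vec H; vec L][vec H; vec L]^T between witnesses *)
  (forall (Q : 'I_N -> 'M[R]_(tn n)) (Z : 'M[R]_(n * (n + m))),
     (forall k, pdmx (Q k)) -> psdmx Z -> \rank Z = 1%N ->
     (forall k, psdmx (Slmi n m (M k) (Q k) Z bt)) ->
     exists (H : 'M[R]_n) (L : 'M[R]_(m, n)), Z = Zof n m H L /\
       (forall k, psdmx (Sqmi n m (M k) (Q k) H L bt))) /\
  (forall (Q : 'I_N -> 'M[R]_(tn n)) (H : 'M[R]_n) (L : 'M[R]_(m, n)),
     (forall k, pdmx (Q k)) ->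
     (forall k, psdmx (Sqmi n m (M k) (Q k) H L bt)) ->
     psdmx (Zof n m H L) /\ \rank (Zof n m H L) = 1%N /\
     (forall k, psdmx (Slmi n m (M k) (Q k) (Zof n m H L) bt))) /\
  (forall (Q : 'I_N -> 'M[R]_(tn n)) (Z : 'M[R]_(n * (n + m))),
     (forall k, pdmx (Q k)) -> psdmx Z -> \rank Z = 1%N ->
     (forall k, pdmx (Slmi n m (M k) (Q k) Z 1)) ->
     exists (H : 'M[R]_n) (L : 'M[R]_(m, n)), Z = Zof n m H L /\
       (forall k, pdmx (Sqmi n m (M k) (Q k) H L 1))) /\
  (forall (Q : 'I_N -> 'M[R]_(tn n)) (H : 'M[R]_n) (L : 'M[R]_(m, n)),
     (forall k, pdmx (Q k)) ->
     (forall k, pdmx (Sqmi n m (M k) (Q k) H L 1)) ->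
     psdmx (Zof n m H L) /\ \rank (Zof n m H L) = 1%N /\
     (forall k, pdmx (Slmi n m (M k) (Q k) (Zof n m H L) 1))).
Proof.
move=> n_gt0 m_gt0 N_gt0 _ _.
have psd_psd : forall X : 'M[R]_(tn n + tn n), psdmx X -> psdmx X by [].
have pd_psd := @pdmx_psdmx R (tn n + tn n).
split; first exact: lmi_qmi_equiv psd_psd.
split; first exact: lmi_qmi_equiv pd_psd.
split; first by move=> Q Z _; apply: lmi_to_qmi.
split; first exact: qmi_to_lmi psd_psd.
split; first by move=> Q Z _; apply: lmi_to_qmi.
exact: qmi_to_lmi pd_psd.
Qed.
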